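(* Assume $\mathbf a,\mathbf b\in\Delta^n$ with strictly positive entries, let $\kappa=1/\min\{a_{min},b_{min}\}$ and $M=\log(2)\|C\|_\infty^2(n+3\kappa)^2+2n\|C\|_\infty^2$. Then $$0\le\mathrm{OT}(\mathbf a,\mathbf b)-\mathbf{UOT}_{\mathbf{KL}}(\mathbf a,\mathbf b)\le\frac{M}{\tau},$$ where $\mathrm{OT}(\mathbf a,\mathbf b)=\min_{X\in\Pi(\mathbf a,\mathbf b)}\langle C,X\rangle$ and $\mathbf{UOT}_{\mathbf{KL}}(\mathbf a,\mathbf b)=\min_{X\in\mathbb{R}^{n\times n}_+}\big\{\langle C,X\rangle+\tau\mathbf{KL}(X\mathbf 1_n\|\mathbf a)+\tau\mathbf{KL}(X^\top\mathbf 1_n\|\mathbf b)\big\}$.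
   Context: Let $n\ge1$, $C\in\mathbb{R}^{n\times n}$ with nonnegative entries and $\|C\|_\infty=\max_{i,j}|C_{ij}|$; $\tau>0$; $\Delta^n=\{\mathbf x\in\mathbb{R}^n_+:\sum_i x_i=1\}$; $a_{min}=\min_i a_i$, $b_{min}=\min_i b_i$; $\Pi(\mathbf a,\mathbf b)=\{X\in\mathbb{R}^{n\times n}_+:X\mathbf 1_n=\mathbf a,\ X^\top\mathbf 1_n=\mathbf b\}$. For $\mathbf x\in\mathbb{R}^n_+$ and $\mathbf y$ with positive entries, $\mathbf{KL}(\mathbf x\|\mathbf y)=\sum_i x_i\log(x_i/y_i)-x_i+y_i$ (with $0\log0=0$). $\mathbf 1_n$ is the all-ones vector. *)

From HB Require Import structures.
From mathcomp Require Import all_boot all_order all_algebra.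
From mathcomp Require Import all_classical all_reals all_analysis.
Set Implicit Arguments. Unset Strict Implicit. Unset Printing Implicit Defensive.
Import Order.TTheory GRing.Theory Num.Theory.
Local Open Scope classical_set_scope.
Local Open Scope ring_scope.

Section Defs.
Variable R : realType.

Definition in_simplex (n : nat) (x : 'I_n -> R) : Prop :=
  (forall i, 0 <= x i) /\ \sum_(i < n) x i = 1.

(* minimum entry of a vector (n >= 1): the infimum of its finite range *)
Definition vmin (n : nat) (x : 'I_n -> R) : R := inf (range x).

Definition mx_sup_norm (n : nat) (C : 'M[R]_n) : R :=
  \big[Num.max/0]_(i < n) \big[Num.max/0]_(j < n) `|C i j|.

Definition mx_nonneg (n : nat) (X : 'M[R]_n) : Prop := forall i j, 0 <= X i j.

Definition frob (n : nat) (C X : 'M[R]_n) : R :=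
  \sum_(i < n) \sum_(j < n) C i j * X i j.

Definition rowsum (n : nat) (X : 'M[R]_n) : 'I_n -> R := fun i => \sum_(j < n) X i j.
Definition colsum (n : nat) (X : 'M[R]_n) : 'I_n -> R := fun j => \sum_(i < n) X i j.

Definition transport_polytope (n : nat) (a b : 'I_n -> R) : set 'M[R]_n :=
  [set X | mx_nonneg X /\ rowsum X = a /\ colsum X = b].

Definition KL (n : nat) (x y : 'I_n -> R) : R :=
  \sum_(i < n) ((if x i == 0 then 0 else x i * ln (x i / y i)) - x i + y i).

Definition OT (n : nat) (C : 'M[R]_n) (a b : 'I_n -> R) : R :=
  inf [set frob C X | X in transport_polytope a b].

Definition UOT_KL (n : nat) (C : 'M[R]_n) (tau : R) (a b : 'I_n -> R) : R :=
  inf [set frob C X + tau * KL (rowsum X) a + tau * KL (colsum X) b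
      | X in [set Y : 'M[R]_n | mx_nonneg Y]].

End Defs.

From HB Require Import structures.
From mathcomp Require Import all_boot all_order all_algebra.
From mathcomp Require Import all_classical all_reals all_analysis.
From mathcomp Require Import ring lra.
Set Implicit Arguments. Unset Strict Implicit. Unset Printing Implicit Defensive.
Import Order.TTheory GRing.Theory Num.Theory.
Local Open Scope classical_set_scope.
Local Open Scope ring_scope.

(* The lower bound holds because UOT evaluated at a transport plan equals its
   cost.  For the upper bound, any nonnegative X can be rounded onto Pi(a,b)
   (scale rows and columns down to the marginals, then add a rank-one
   correction) at extra cost at most ||C||_oo times the l1 marginal errors
   of X.  Each coordinate of these errors is paid for by the KL penalty:
   KL(t|y) dominates the squared Hellinger distance (sqrt t - sqrt y)^2, so
   L|t - y| <= tau KL(t|y) + 2 L^2/tau whenever tau >= 2L.  Summing gives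
   OT <= UOT + 4 n L^2/tau, and 4 n L^2 <= M. *)

Section KLTerm.
Variable R : realType.
Implicit Types t y u L tau : R.

Definition kl_term t y : R := (if t == 0 then 0 else t * ln (t / y)) - t + y.

Lemma KLE n (x y : 'I_n -> R) : KL x y = \sum_i kl_term (x i) (y i).
Proof. by []. Qed.

Lemma ln_le_subr1 {u} : 0 < u -> ln u <= u - 1.
Proof.
by move=> u0; have := @le_ln1Dx R (u - 1); rewrite addrCA subrr addr0; apply; lra.
Qed.

Lemma hellinger_le_kl_term {t y} : 0 <= t -> 0 < y ->
  (Num.sqrt t - Num.sqrt y) ^+ 2 <= kl_term t y.
Proof.
move=> t0 y0; rewrite /kl_term.
have [->|tn0] := eqVneq t 0.
  by rewrite sqrtr0 sub0r sqrrN sqr_sqrtr ?(ltW y0) // subr0 add0r.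
have tp : 0 < t by rewrite lt_def tn0.
set s := Num.sqrt t; set v := Num.sqrt y.
have sp : 0 < s by rewrite sqrtr_gt0.
have vp : 0 < v by rewrite sqrtr_gt0.
have ts : t = s ^+ 2 by rewrite sqr_sqrtr // ltW.
have yv : y = v ^+ 2 by rewrite sqr_sqrtr // ltW.
have ln_ratio : ln (t / y) = - ln (v / s) *+ 2.
  rewrite ts yv -expr_div_n -invf_div lnXn ?invr_gt0 ?divr_gt0 //.
  by rewrite lnV ?posrE ?divr_gt0.
have hln := ln_le_subr1 (divr_gt0 vp sp).
have : t * (2 * (1 - v / s)) <= t * ln (t / y).
  by rewrite ler_pM2l // ln_ratio mulr2n; lra.
have -> : t * (2 * (1 - v / s)) = 2 * s ^+ 2 - 2 * s * v.
  by rewrite ts; field; rewrite gt_eqF.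
rewrite ts yv; lra.
Qed.

Lemma kl_term_ge0 t y : 0 <= t -> 0 < y -> 0 <= kl_term t y.
Proof. by move=> t0 y0; apply: le_trans (sqr_ge0 _) (hellinger_le_kl_term t0 y0). Qed.

Lemma mul_dist_le_kl_term L tau t y :
    0 <= L -> 0 < tau -> 2 * L <= tau -> 0 <= t -> 0 < y -> y <= 1 ->
  L * `|t - y| <= tau * kl_term t y + 2 * (L ^+ 2 / tau).
Proof.
move=> L0 tau0 Ltau t0 y0 y1.
have hell := hellinger_le_kl_term t0 y0.
set s := Num.sqrt t in hell *; set v := Num.sqrt y in hell *.
have v0 : 0 <= v by rewrite sqrtr_ge0.
have ts : t = s ^+ 2 by rewrite sqr_sqrtr.
have yv : y = v ^+ 2 by rewrite sqr_sqrtr // ltW.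
have v1 : v <= 1 by rewrite -sqrtr1 ler_sqrt.
set w := s - v in hell; set aw := `|w|.
have aw0 : 0 <= aw := normr_ge0 w.
have dist_le : `|t - y| <= aw ^+ 2 + 2 * aw.
  have -> : t - y = w * (w + 2 * v) by rewrite /w ts yv; ring.
  rewrite normrM; apply: (@le_trans _ _ (aw * (aw + 2 * v))); last by nra.
  rewrite ler_wpM2l // (le_trans (ler_normD _ _)) // normrM.
  by rewrite (ger0_norm v0) ger0_norm.
have amgm : 2 * L * aw <= tau * aw ^+ 2 / 2 + 2 * (L ^+ 2 / tau).
  rewrite -subr_ge0.
  have -> : tau * aw ^+ 2 / 2 + 2 * (L ^+ 2 / tau) - 2 * L * aw =
            (tau * aw - 2 * L) ^+ 2 / (2 * tau) by field; rewrite gt_eqF.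
  by rewrite divr_ge0 ?sqr_ge0 // mulr_ge0 // ltW.
have hell' : tau * aw ^+ 2 <= tau * kl_term t y.
  by apply: ler_wpM2l; [exact: ltW | rewrite /aw real_normK ?num_real].
have := ler_wpM2l L0 dist_le; nra.
Qed.

Lemma KL_ge0 n (x y : 'I_n -> R) : (forall i, 0 <= x i) -> (forall i, 0 < y i) ->
  0 <= KL x y.
Proof. by move=> x0 y0; apply: sumr_ge0 => i _; apply: kl_term_ge0. Qed.

Lemma KL_id n (y : 'I_n -> R) : KL y y = 0.
Proof.
rewrite KLE big1 // => i _; rewrite /kl_term.
have [->|yn0] := eqVneq (y i) 0; first by rewrite subrr addr0.
by rewrite divff // ln1 mulr0 sub0r addNr.
Qed.

Lemma mul_l1_dist_le_KL n (x y : 'I_n -> R) L tau :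
    0 <= L -> 0 < tau -> 2 * L <= tau ->
    (forall i, 0 <= x i) -> (forall i, 0 < y i) -> (forall i, y i <= 1) ->
  L * \sum_i `|x i - y i| <= tau * KL x y + n%:R * (2 * (L ^+ 2 / tau)).
Proof.
move=> L0 tau0 Ltau x0 y0 y1.
rewrite mulr_natl -[n in _ *+ n]card_ord -sumr_const KLE !mulr_sumr -big_split /=.
by apply: ler_sum => i _; apply: mul_dist_le_kl_term.
Qed.

End KLTerm.

Section Simplex.
Variables (R : realType) (n : nat) (a : 'I_n -> R).

Lemma simplex_le1 : in_simplex a -> forall i, a i <= 1.
Proof.
move=> [a0 a1] i; rewrite -a1 (bigD1 i) //= lerDl.
by apply: sumr_ge0 => j _.
Qed.

Hypotheses (n_gt0 : (0 < n)%N) (a_gt0 : forall i, 0 < a i).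

Let i0 : 'I_n := Ordinal n_gt0.

Let range_lbound : has_lbound (range a).
Proof. by exists 0 => _ [i _ <-]; apply: ltW. Qed.

Lemma vmin_gt0 : 0 < vmin a.
Proof.
have min_gt0 : 0 < \big[Num.min/1]_i a i.
  by apply: (big_ind (fun x => 0 < x)) => // x y x0 y0; rewrite lt_min x0.
apply: (lt_le_trans min_gt0); apply: lb_le_inf; first by exists (a i0), i0.
by move=> _ [i _ <-]; apply: bigmin_le.
Qed.

Lemma vmin_le1 : in_simplex a -> vmin a <= 1.
Proof.
by move=> sa; apply: le_trans (simplex_le1 sa i0); apply: ge_inf => //; exists i0.
Qed.

End Simplex.

Section SupNorm.
Variables (R : realType) (n : nat) (C : 'M[R]_n).

Lemma mx_sup_norm_ge i j : `|C i j| <= mx_sup_norm C.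
Proof.
apply: le_trans (le_bigmax _ _ i).
exact: (le_bigmax _ (fun j => `|C i j|) j).
Qed.

Lemma mx_sup_norm_ge0 : 0 <= mx_sup_norm C.
Proof.
apply: (big_ind (fun x => 0 <= x)) => // [x y x0 y0|i _]; first by rewrite le_max x0.
by apply: (big_ind (fun x => 0 <= x)) => // x y x0 y0; rewrite le_max x0.
Qed.

End SupNorm.

Section Plans.
Variables (R : realType) (n : nat).
Implicit Types (C X : 'M[R]_n) (r c : R).

Lemma rowsum_ge0 X : mx_nonneg X -> forall i, 0 <= rowsum X i.
Proof. by move=> X0 i; apply: sumr_ge0 => j _. Qed.

Lemma colsum_ge0 X : mx_nonneg X -> forall j, 0 <= colsum X j.
Proof. by move=> X0 j; apply: sumr_ge0 => i _. Qed.

Lemma frob_ge0 C X : (forall i j, 0 <= C i j) -> mx_nonneg X -> 0 <= frob C X.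
Proof.
by move=> C0 X0; apply: sumr_ge0 => i _; apply: sumr_ge0 => j _; apply: mulr_ge0.
Qed.

Lemma min1_divr_ge0 c r : 0 <= c -> 0 <= r -> 0 <= Num.min 1 (c / r).
Proof. by move=> c0 r0; rewrite le_min ler01 divr_ge0. Qed.

Lemma mul_min1_divr r c : 0 <= r -> 0 <= c -> r * Num.min 1 (c / r) = Num.min r c.
Proof.
move=> r0 c0; have [->|rn0] := eqVneq r 0; first by rewrite mul0r min_l.
by rewrite minr_pMr // mulr1 mulrCA mulfV // mulr1.
Qed.

Lemma sub_minl_le_dist r c : c - Num.min r c <= `|r - c|.
Proof. by case: (leP r c) => _; rewrite ?subrr // distrC ler_norm. Qed.

Lemma sub_minr_le_dist r c : r - Num.min r c <= `|r - c|.
Proof. by case: (leP r c) => _; rewrite ?subrr // ler_norm. Qed.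

Lemma mulr_psum_divK (e : 'I_n -> R) i : (forall j, 0 <= e j) ->
  e i * (\sum_j e j) / (\sum_j e j) = e i.
Proof.
move=> e0; have [D0|Dn0] := eqVneq (\sum_j e j) 0; last by rewrite mulfK.
by rewrite (psumr_eq0P (fun j _ => e0 j) D0) // !mul0r.
Qed.

End Plans.

(* The rounding procedure of Altschuler, Weed and Rigollet. *)
Section Rounding.
Variables (R : realType) (n : nat) (a b : 'I_n -> R) (X : 'M[R]_n).
Hypotheses (sa : in_simplex a) (sb : in_simplex b) (X0 : mx_nonneg X).

Definition row_scale i := Num.min 1 (a i / rowsum X i).
Definition col_scale j := Num.min 1 (b j / colsum X j).

Definition shrunk : 'M[R]_n :=
  \matrix_(i, j) (X i j * Num.min (row_scale i) (col_scale j)).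

Definition row_deficit i := a i - rowsum shrunk i.
Definition col_deficit j := b j - colsum shrunk j.
Definition deficit := \sum_i row_deficit i.

Definition rounded : 'M[R]_n :=
  \matrix_(i, j) (shrunk i j + row_deficit i * col_deficit j / deficit).

Let a0 : forall i, 0 <= a i := proj1 sa.
Let b0 : forall j, 0 <= b j := proj1 sb.

Lemma row_scale_le1 i : row_scale i <= 1.
Proof. by rewrite ge_min lexx. Qed.

Lemma col_scale_le1 j : col_scale j <= 1.
Proof. by rewrite ge_min lexx. Qed.

Lemma shrunk_ge0 i j : 0 <= shrunk i j.
Proof.
rewrite mxE mulr_ge0 // le_min.
by rewrite !min1_divr_ge0 ?rowsum_ge0 ?colsum_ge0.
Qed.

Lemma rowsum_shrunk_le i : rowsum shrunk i <= Num.min (rowsum X i) (a i).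
Proof.
rewrite -mul_min1_divr ?rowsum_ge0 // [rowsum X i]/rowsum mulr_suml.
by apply: ler_sum => j _; rewrite mxE ler_wpM2l // ge_min lexx.
Qed.

Lemma colsum_shrunk_le j : colsum shrunk j <= Num.min (colsum X j) (b j).
Proof.
rewrite -mul_min1_divr ?colsum_ge0 // [colsum X j]/colsum mulr_suml.
by apply: ler_sum => i _; rewrite mxE ler_wpM2l // ge_min lexx orbT.
Qed.

Lemma row_deficit_ge0 i : 0 <= row_deficit i.
Proof. by rewrite subr_ge0 (le_trans (rowsum_shrunk_le i)) // ge_min lexx orbT. Qed.

Lemma col_deficit_ge0 j : 0 <= col_deficit j.
Proof. by rewrite subr_ge0 (le_trans (colsum_shrunk_le j)) // ge_min lexx orbT. Qed.

Lemma sum_col_deficit : \sum_j col_deficit j = deficit.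
Proof.
rewrite /deficit !sumrB (proj2 sa) (proj2 sb).
by rewrite /rowsum /colsum exchange_big.
Qed.

Lemma row_deficit_le i :
  row_deficit i <= `|rowsum X i - a i| + \sum_j X i j * (1 - col_scale j).
Proof.
have sub_shrunk j :
    X i j - shrunk i j <= X i j * (1 - row_scale i) + X i j * (1 - col_scale j).
  rewrite mxE -{1}(mulr1 (X i j)) -!mulrBr -mulrDr ler_wpM2l //.
  have := row_scale_le1 i; have := col_scale_le1 j.
  by case: (leP (row_scale i) (col_scale j)) => _; lra.
have -> : row_deficit i = a i - rowsum X i + \sum_j (X i j - shrunk i j).
  by rewrite /row_deficit sumrB /rowsum; ring.
apply: (le_trans (lerD (lexx _) (ler_sum _ (fun j _ => sub_shrunk j)))).
rewrite big_split /= -mulr_suml -/(rowsum X i) mulrBr mulr1.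
rewrite mul_min1_divr ?rowsum_ge0 // addrA lerD2r addrA subrK.
exact: sub_minl_le_dist.
Qed.

Lemma deficit_le :
  deficit <= \sum_i `|rowsum X i - a i| + \sum_j `|colsum X j - b j|.
Proof.
apply: (le_trans (ler_sum _ (fun i _ => row_deficit_le i))).
rewrite big_split lerD2l exchange_big /=; apply: ler_sum => j _.
rewrite -mulr_suml -/(colsum X j) mulrBr mulr1 mul_min1_divr ?colsum_ge0 //.
exact: sub_minr_le_dist.
Qed.

Lemma rounded_in_polytope : transport_polytope a b rounded.
Proof.
split; [|split].
- move=> i j; rewrite mxE addr_ge0 ?shrunk_ge0 // divr_ge0 ?mulr_ge0 //.
    exact: row_deficit_ge0.
  + exact: col_deficit_ge0.
  by apply: sumr_ge0 => i' _; apply: row_deficit_ge0.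
- apply/funext => i; rewrite /rowsum; under eq_bigr => j _ do rewrite mxE.
  rewrite big_split /= -mulr_suml -mulr_sumr sum_col_deficit.
  rewrite mulr_psum_divK; last exact: row_deficit_ge0.
  by rewrite /row_deficit /rowsum addrC subrK.
- apply/funext => j; rewrite /colsum; under eq_bigr => i _ do rewrite mxE.
  rewrite big_split /=.
  under [X in _ + X]eq_bigr => i _ do rewrite (mulrC (row_deficit i)).
  rewrite -mulr_suml -mulr_sumr -/deficit -sum_col_deficit.
  rewrite mulr_psum_divK; last exact: col_deficit_ge0.
  by rewrite /col_deficit /colsum addrC subrK.
Qed.

Lemma frob_rounded_le (C : 'M[R]_n) : (forall i j, 0 <= C i j) ->
  frob C rounded <= frob C X + mx_sup_norm C * deficit.
Proof.
move=> C0; set L := mx_sup_norm C.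
have CL i j : C i j <= L by rewrite -(ger0_norm (C0 i j)) mx_sup_norm_ge.
have -> : L * deficit = \sum_i \sum_j L * (row_deficit i * col_deficit j / deficit).
  rewrite /deficit mulr_sumr; apply: eq_bigr => i _.
  rewrite -mulr_sumr -mulr_suml -mulr_sumr -/deficit sum_col_deficit.
  by rewrite mulr_psum_divK // => i'; apply: row_deficit_ge0.
rewrite /frob -big_split /=; apply: ler_sum => i _.
rewrite -big_split /=; apply: ler_sum => j _.
rewrite mxE mulrDr; apply: lerD.
  by apply: ler_wpM2l => //; rewrite mxE ler_piMr // ge_min row_scale_le1.
by rewrite ler_wpM2r // divr_ge0 ?mulr_ge0 ?row_deficit_ge0 ?col_deficit_ge0 //;
  apply: sumr_ge0 => i' _; apply: row_deficit_ge0.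
Qed.

End Rounding.

Section OptimalTransport.
Variables (R : realType) (n : nat) (C : 'M[R]_n) (a b : 'I_n -> R).
Hypotheses (C0 : forall i j, 0 <= C i j) (sa : in_simplex a) (sb : in_simplex b).

Lemma OT_lbound : has_lbound [set frob C X | X in transport_polytope a b].
Proof. by exists 0 => _ [X [X0 _] <-]; apply: frob_ge0. Qed.

Lemma transport_polytope_neq0 : transport_polytope a b !=set0.
Proof.
have O0 : mx_nonneg (0 : 'M[R]_n) by move=> i j; rewrite mxE.
by exists (rounded a b 0); apply: rounded_in_polytope.
Qed.

Lemma OT_le_frob_add X : mx_nonneg X ->
  OT C a b <= frob C X + mx_sup_norm C *
    (\sum_i `|rowsum X i - a i| + \sum_j `|colsum X j - b j|).
Proof.
move=> X0; have OT_le : OT C a b <= frob C (rounded a b X).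
  apply: ge_inf; first exact: OT_lbound.
  by exists (rounded a b X); first exact: rounded_in_polytope.
apply: (le_trans OT_le); apply: (le_trans (frob_rounded_le sa sb X0 C0)).
by rewrite lerD2l; apply: ler_wpM2l; [exact: mx_sup_norm_ge0 | exact: deficit_le].
Qed.

End OptimalTransport.

Section UnbalancedOT.
Variables (R : realType) (n : nat) (C : 'M[R]_n) (tau : R) (a b : 'I_n -> R).
Hypotheses (C0 : forall i j, 0 <= C i j) (tau0 : 0 < tau)
  (sa : in_simplex a) (sb : in_simplex b)
  (a_gt0 : forall i, 0 < a i) (b_gt0 : forall i, 0 < b i).

Definition uot_objective (X : 'M[R]_n) : R :=
  frob C X + tau * KL (rowsum X) a + tau * KL (colsum X) b.

Let L := mx_sup_norm C.

Lemma uot_objective_ge0 X : mx_nonneg X -> 0 <= uot_objective X.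
Proof.
move=> X0; rewrite !addr_ge0 ?frob_ge0 // mulr_ge0 ?(ltW tau0) //.
  exact: KL_ge0 (rowsum_ge0 X0) a_gt0.
exact: KL_ge0 (colsum_ge0 X0) b_gt0.
Qed.

Lemma UOT_KL_lbound :
  has_lbound [set uot_objective X | X in [set Y : 'M[R]_n | mx_nonneg Y]].
Proof. by exists 0 => _ [X X0 <-]; apply: uot_objective_ge0. Qed.

Lemma UOT_KL_le_OT : UOT_KL C tau a b <= OT C a b.
Proof.
apply: lb_le_inf.
  by case: (transport_polytope_neq0 sa sb) => Y HY; exists (frob C Y), Y.
move=> _ [Y [Y0 [Yr Yc]] <-].
have := ge_inf UOT_KL_lbound (ex_intro2 _ _ Y Y0 erefl).
by rewrite /uot_objective Yr Yc !KL_id !mulr0 !addr0.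
Qed.

Lemma OT_le_uot_objective X : 2 * L <= tau -> mx_nonneg X ->
  OT C a b <= uot_objective X + 4 * n%:R * L ^+ 2 / tau.
Proof.
move=> Ltau X0; apply: (le_trans (OT_le_frob_add C0 sa sb X0)).
have L0 : 0 <= L := mx_sup_norm_ge0 C.
have row := mul_l1_dist_le_KL L0 tau0 Ltau (rowsum_ge0 X0) a_gt0 (simplex_le1 sa).
have col := mul_l1_dist_le_KL L0 tau0 Ltau (colsum_ge0 X0) b_gt0 (simplex_le1 sb).
have -> : 4 * n%:R * L ^+ 2 / tau =
  n%:R * (2 * (L ^+ 2 / tau)) + n%:R * (2 * (L ^+ 2 / tau)) by ring.
rewrite /uot_objective -/L; lra.
Qed.

Lemma OT_le_twice_norm : OT C a b <= 2 * L.
Proof.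
have O0 : mx_nonneg (0 : 'M[R]_n) by move=> i j; rewrite mxE.
have dist_to0 (y : 'I_n -> R) : in_simplex y -> \sum_i `|0 - y i| = 1.
  by case=> y0 <-; apply: eq_bigr => i _; rewrite sub0r normrN ger0_norm.
have frob0 : frob C 0 = 0.
  by rewrite /frob big1 // => i _; rewrite big1 // => j _; rewrite mxE mulr0.
have rowsum0 : rowsum (0 : 'M[R]_n) = fun=> 0.
  by apply/funext => i; rewrite /rowsum big1 // => j _; rewrite mxE.
have colsum0 : colsum (0 : 'M[R]_n) = fun=> 0.
  by apply/funext => j; rewrite /colsum big1 // => i _; rewrite mxE.
have := OT_le_frob_add C0 sa sb O0.
by rewrite frob0 rowsum0 colsum0 !dist_to0 // add0r -/L (mulrC 2).
Qed.

(* For [tau < 2 L] the bound is already implied by [OT <= 2 L] and [UOT >= 0]. *)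
Lemma OT_sub_UOT_KL_le : (0 < n)%N ->
  OT C a b - UOT_KL C tau a b <= 4 * n%:R * L ^+ 2 / tau.
Proof.
move=> n_gt0; rewrite lerBlDr -lerBlDl.
apply: lb_le_inf; first by exists (uot_objective 0), 0 => // i j; rewrite mxE.
move=> _ [X X0 <-]; rewrite lerBlDl.
have [tauL|Ltau] := ltP tau (2 * L); last by rewrite addrC OT_le_uot_objective.
set K := 4 * n%:R * L ^+ 2 / tau.
have twiceL : 2 * L <= K.
  rewrite ler_pdivlMr //.
  have L0 : 0 <= L := mx_sup_norm_ge0 C.
  have := ler_wpM2l L0 (ltW tauL).
  have : L ^+ 2 <= n%:R * L ^+ 2 by rewrite ler_peMl ?sqr_ge0 // ler1n.
  nra.
rewrite -/(uot_objective X).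
have := uot_objective_ge0 X0; have := OT_le_twice_norm; lra.
Qed.

Lemma kappa_ge1 : (0 < n)%N -> 1 <= 1 / Num.min (vmin a) (vmin b).
Proof.
move=> n_gt0; have min_gt0 : 0 < Num.min (vmin a) (vmin b).
  by rewrite lt_min !vmin_gt0.
by rewrite ler_pdivlMr // mul1r ge_min vmin_le1.
Qed.

End UnbalancedOT.

Lemma half_le_ln2 (R : realType) : 1 / 2 <= ln (2 : R).
Proof. by have := @ln_le_subr1 R 2^-1; rewrite lnV ?posrE //; lra. Qed.

Lemma four_mul_sqr_le (R : realType) (n : nat) (L kappa : R) :
    (0 < n)%N -> 1 <= kappa ->
  4 * n%:R * L ^+ 2 <=
    ln 2 * L ^+ 2 * (n%:R + 3 * kappa) ^+ 2 + 2 * n%:R * L ^+ 2.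
Proof.
move=> n_gt0 k1.
have n1 : 1 <= n%:R :> R by rewrite ler1n.
have ln2 := @half_le_ln2 R.
have sq_ge : 4 * n%:R <= (n%:R + 3 * kappa) ^+ 2 :> R by nra.
have : 2 * n%:R <= ln 2 * (n%:R + 3 * kappa) ^+ 2 :> R.
  by have := sqr_ge0 (n%:R + 3 * kappa); nra.
by have := sqr_ge0 L; nra.
Qed.

Theorem theorem4 (R : realType) (n : nat) (C : 'M[R]_n) (tau : R)
  (a b : 'I_n -> R) :
  (1 <= n)%N ->
  (forall i j, 0 <= C i j) ->
  0 < tau ->
  in_simplex a -> in_simplex b ->
  (forall i, 0 < a i) -> (forall i, 0 < b i) ->
  let kappa := 1 / Num.min (vmin a) (vmin b) in
  let M := ln 2 * mx_sup_norm C ^+ 2 * (n%:R + 3 * kappa) ^+ 2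
           + 2 * n%:R * mx_sup_norm C ^+ 2 in
  0 <= OT C a b - UOT_KL C tau a b /\ OT C a b - UOT_KL C tau a b <= M / tau.
Proof.
move=> n_gt0 C0 tau0 sa sb a_gt0 b_gt0 kappa M.
split; first by rewrite subr_ge0 UOT_KL_le_OT.
apply: (le_trans (OT_sub_UOT_KL_le C0 tau0 sa sb a_gt0 b_gt0 n_gt0)).
rewrite ler_pM2r ?invr_gt0 //.
by apply: four_mul_sqr_le => //; apply: kappa_ge1.
Qed.
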